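(* Let $\mathcal A$ be a GDN superalgebra. Then for every integer $n\ge1$, $\mathcal A^n_L$ is an ideal of $\mathcal A$, and $(\mathcal A^2)^n\subseteq\mathcal A^{n+1}_L$.
   Context: A GDN superalgebra is a superalgebra $\mathcal A=\mathcal A_0\oplus\mathcal A_1$ over a field (product $\circ$, $\mathcal A_i\circ\mathcal A_j\subseteq\mathcal A_{i+j}$ mod 2, $|x|=i$ for nonzero $x\in\mathcal A_i$) satisfying for homogeneous $x,y,z$: $x\circ(y\circ z)-(x\circ y)\circ z=(-1)^{|x||y|}(y\circ(x\circ z)-(y\circ x)\circ z)$ and $(x\circ y)\circ z=(-1)^{|y||z|}(x\circ z)\circ y$. For subspaces $\mathcal V_i$, $[\mathcal V_1,\dots,\mathcal V_n]_L$ is the span of $((\cdots(x_1\circ x_2)\cdots)\circ x_n)$ with $x_i\in\mathcal V_i$, and $\mathcal A^n_L=[\mathcal A,\dots,\mathcal A]_L$ ($n$ copies). For a subspace $\mathcal V$, $\mathcal V^1=\mathcal V$ and $\mathcal V^n=\sum_{i=1}^{n-1}\mathcal V^i\circ\mathcal V^{n-i}$ (span of products); $\mathcal A^2=\mathcal A\circ\mathcal A$. *)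

From HB Require Import structures.
From mathcomp Require Import all_boot all_order all_algebra.
Set Implicit Arguments. Unset Strict Implicit. Unset Printing Implicit Defensive.
Import Order.TTheory GRing.Theory Num.Theory.
Local Open Scope ring_scope.

(* A superalgebra over a field F: an F-vector space V (arbitrary dimension)
   with a bilinear product and a Z/2-grading V = A0 (+) A1 given by the
   predicates grade false (= A_0) and grade true (= A_1). *)
Record superalgebra (F : fieldType) (V : lmodType F) := SuperAlgebra {
  smul : V -> V -> V;
  smulDl : forall x y z, smul (x + y) z = smul x z + smul y z;
  smulDr : forall x y z, smul x (y + z) = smul x y + smul x z;
  smulZl : forall (a : F) x y, smul (a *: x) y = a *: smul x y;
  smulZr : forall (a : F) x y, smul x (a *: y) = a *: smul x y;
  grade : bool -> V -> Prop;
  grade0 : forall i, grade i 0;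
  gradeD : forall i x y, grade i x -> grade i y -> grade i (x + y);
  gradeZ : forall i (a : F) x, grade i x -> grade i (a *: x);
  grade_sum : forall v, exists v0 v1,
      grade false v0 /\ grade true v1 /\ v = v0 + v1;
  grade_direct : forall v, grade false v -> grade true v -> v = 0;
  grade_mul : forall i j x y, grade i x -> grade j y ->
      grade (addb i j) (smul x y)
}.

Arguments superalgebra : clear implicits.

Section GDN.
Variables (F : fieldType) (V : lmodType F) (A : superalgebra F V).
Local Notation "x ** y" := (smul A x y) (at level 40, left associativity) : ring_scope.

(* (-1)^(|x||y|) for parities i j *)
Definition psign (i j : bool) : F := (-1) ^+ (i && j).

Definition is_GDN : Prop :=
  (forall i j k x y z, grade A i x -> grade A j y -> grade A k z ->
     x ** (y ** z) - (x ** y) ** z =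
     psign i j *: (y ** (x ** z) - (y ** x) ** z)) /\
  (forall i j k x y z, grade A i x -> grade A j y -> grade A k z ->
     (x ** y) ** z = psign j k *: ((x ** z) ** y)).

Inductive span (S : V -> Prop) : V -> Prop :=
| span_base v : S v -> span S v
| span_zero : span S 0
| span_add x y : span S x -> span S y -> span S (x + y)
| span_scale (a : F) x : span S x -> span S (a *: x).

(* A^n_L : span of left-normed products ((x1 x2) ...) xn *)
Definition Lpow (n : nat) : V -> Prop :=
  span (fun v => exists (x : V) (xs : seq V),
           size xs = n.-1 /\ v = foldl (smul A) x xs).

Definition Asq : V -> Prop := span (fun v => exists x y, v = x ** y).

(* For a subspace S: S^1 = S, S^n = sum_{i=1}^{n-1} S^i o S^{n-i} (span). *)
Inductive spow (S : V -> Prop) : nat -> V -> Prop :=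
| spow_base v : S v -> spow S 1 v
| spow_mul i j x y : (0 < i)%N -> (0 < j)%N -> spow S i x -> spow S j y ->
    spow S (i + j) (x ** y)
| spow_zero n : (1 < n)%N -> spow S n 0
| spow_add n x y : (1 < n)%N -> spow S n x -> spow S n y -> spow S n (x + y)
| spow_scale n (a : F) x : (1 < n)%N -> spow S n x -> spow S n (a *: x).

Definition is_ideal (I : V -> Prop) : Prop :=
  I 0 /\ (forall x y, I x -> I y -> I (x + y)) /\
  (forall (a : F) x, I x -> I (a *: x)) /\
  (forall a x, I x -> I (a ** x)) /\ (forall a x, I x -> I (x ** a)).

End GDN.

From Pilot Require Import Defs.
From HB Require Import structures.
From mathcomp Require Import all_boot all_order all_algebra.

(* Everything is reduced to products of homogeneous left-normed words.  The
   first GDN identity rewrites [a (w z)] as [(a w) z] plus [± (w (a z) - (w a) z)],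
   so by induction on [w] left multiplication keeps a word in [A^n_L].  The
   second identity gives [(w y) v = ± (w v) y], so by induction on [u] the
   product of words of lengths [p] and [q] lies in [A^(p+q-1)_L].  This yields
   both the ideal property and, by induction on the degree of [(A^2)^n] with
   [A^2 = A^2_L], the inclusion [(A^2)^n ⊆ A^(n+1)_L]. *)

Set Implicit Arguments. Unset Strict Implicit.
Import GRing.Theory.
Local Open Scope ring_scope.

Section Span.
Variables (F : fieldType) (V : lmodType F).
Local Notation span := (@Defs.span F V).

Lemma span_bind (S T : V -> Prop) :
  (forall v, S v -> span T v) -> forall v, span S v -> span T v.
Proof.
move=> ST v; elim=> [u /ST //|| x y _ Tx _ Ty | a x _ Tx].
- exact: span_zero.
- exact: span_add.
- exact: span_scale.
Qed.

Lemma span_mono (S T : V -> Prop) :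
  (forall v, S v -> T v) -> forall v, span S v -> span T v.
Proof. by move=> ST; apply: span_bind => v /ST; apply: span_base. Qed.

Lemma span_sub (S : V -> Prop) x y : span S x -> span S y -> span S (x - y).
Proof. by move=> Sx Sy; rewrite -scaleN1r; apply: span_add => //; apply: span_scale. Qed.

Lemma span_linear (f : V -> V) (S T : V -> Prop) :
  (forall x y, f (x + y) = f x + f y) -> (forall (a : F) x, f (a *: x) = a *: f x) ->
  (forall s, S s -> span T (f s)) -> forall v, span S v -> span T (f v).
Proof.
move=> fD fZ ST v; elim=> [u /ST //|| x y _ Tx _ Ty | a x _ Tx].
- by rewrite -(scale0r 0) fZ scale0r; apply: span_zero.
- by rewrite fD; apply: span_add.
- by rewrite fZ; apply: span_scale.
Qed.

End Span.

Section LeftNormed.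
Variables (F : fieldType) (V : lmodType F) (A : superalgebra F V).
Local Notation span := (@Defs.span F V).
Local Notation "x ** y" := (smul A x y) (at level 40, left associativity).

Definition homogeneous (v : V) := exists i, grade A i v.

Inductive left_normed : nat -> V -> Prop :=
| left_normed1 x : left_normed 1 x
| left_normedS n w y : left_normed n w -> left_normed n.+1 (w ** y).

Inductive hom_left_normed : nat -> V -> Prop :=
| hom_left_normed1 x : homogeneous x -> hom_left_normed 1 x
| hom_left_normedS n w y :
    hom_left_normed n w -> homogeneous y -> hom_left_normed n.+1 (w ** y).

Local Notation Lp n := (span (left_normed n)).

Lemma span_mull S T y :
  (forall s, S s -> span T (y ** s)) -> forall v, span S v -> span T (y ** v).
Proof. by apply: span_linear => [x z | a x]; [apply: smulDr | apply: smulZr]. Qed.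

Lemma span_mulr S T y :
  (forall s, S s -> span T (s ** y)) -> forall v, span S v -> span T (v ** y).
Proof. by apply: span_linear => [x z | a x]; [apply: smulDl | apply: smulZl]. Qed.

Lemma left_normed_gt0 n v : left_normed n v -> (0 < n)%N.
Proof. by case. Qed.

Lemma left_normed_le n v m :
  left_normed n v -> (0 < m)%N -> (m <= n)%N -> left_normed m v.
Proof.
move=> Lv; elim: Lv m => [x|k w y _ IH] [|[|m]] // _ mn.
- exact: left_normed1.
- exact: left_normed1.
- by apply: left_normedS; apply: IH.
Qed.

Lemma hom_left_normed_homogeneous n v : hom_left_normed n v -> homogeneous v.
Proof.
elim=> [x //| k w y _ [i gw] [j gy]].
by exists (addb i j); apply: grade_mul.
Qed.

Lemma hom_left_normed_left_normed n v : hom_left_normed n v -> left_normed n v.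
Proof. by elim=> [x _|k w y _ Lw _]; [apply: left_normed1 | apply: left_normedS]. Qed.

Lemma homogeneous_decomposition x :
  exists x0 x1, [/\ homogeneous x0, homogeneous x1 & x = x0 + x1].
Proof.
have [x0 [x1 [g0 [g1 ->]]]] := grade_sum A x.
by exists x0, x1; split; [exists false | exists true |].
Qed.

Lemma span_hom_left_normed n v : left_normed n v -> span (hom_left_normed n) v.
Proof.
elim=> [x|k w y _ IH].
- have [x0 [x1 [h0 h1 ->]]] := homogeneous_decomposition x.
  by apply: span_add; apply/span_base/hom_left_normed1.
- have [y0 [y1 [h0 h1 ->]]] := homogeneous_decomposition y.
  rewrite smulDr; apply: span_add; apply: (span_mulr _ IH) => s Hs;
  exact/span_base/hom_left_normedS.
Qed.

Lemma LpowE n v : (0 < n)%N -> Lpow A n v <-> Lp n v.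
Proof.
move=> n_gt0; split; apply: span_mono => u.
- move=> [x [xs [size_xs ->]]]; rewrite -(prednK n_gt0) -size_xs.
  elim/last_ind: xs {size_xs} => [|xs y IH]; first exact: left_normed1.
  by rewrite foldl_rcons size_rcons; apply: left_normedS.
- elim=> [x|k w y Lw [x [xs [size_xs ->]]]]; first by exists x, [::].
  exists x, (rcons xs y); rewrite size_rcons foldl_rcons size_xs.
  by rewrite prednK // (left_normed_gt0 Lw).
Qed.

Hypothesis GDN_A : is_GDN A.

Lemma homogeneous_mul_left_normed n a s :
  homogeneous a -> hom_left_normed n s -> Lp n (a ** s).
Proof.
move=> [i ga]; elim=> [x _ | k w z Hw IH [l gz]]; first exact/span_base/left_normed1.
have [j gw] := hom_left_normed_homogeneous Hw.
have Lw := hom_left_normed_left_normed Hw.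
rewrite -[a ** _](subrK ((a ** w) ** z)) (GDN_A.1 i j l a w z ga gw gz).
apply: span_add.
- by apply: span_scale; apply: span_sub; apply: span_base;
    [apply: left_normedS | apply: (left_normed_le (left_normedS _ (left_normedS _ Lw)))].
- by apply: (span_mulr _ IH) => t Lt; apply/span_base/left_normedS.
Qed.

Lemma hom_left_normed_mul p q u v :
  hom_left_normed p u -> hom_left_normed q v -> Lp (p + q).-1 (u ** v).
Proof.
move=> Hu Hv; elim: Hu => [x hx | k w y Hw IH [j gy]].
- exact: homogeneous_mul_left_normed.
- have [i gw] := hom_left_normed_homogeneous Hw.
  have [l gv] := hom_left_normed_homogeneous Hv.
  have kq_gt0 : (0 < k + q)%N.
    by rewrite addn_gt0 (left_normed_gt0 (hom_left_normed_left_normed Hw)).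
  rewrite (GDN_A.2 i j l w y v gw gy gv) addSn /= -(prednK kq_gt0).
  by apply/span_scale/(span_mulr _ IH) => s Ls; apply/span_base/left_normedS.
Qed.

Lemma Lp_mul p q x y : Lp p x -> Lp q y -> Lp (p + q).-1 (x ** y).
Proof.
move=> /(span_bind (@span_hom_left_normed p)) Hx.
move=> /(span_bind (@span_hom_left_normed q)) Hy.
apply: (span_mulr _ Hx) => s Hs; apply: (span_mull _ Hy) => t Ht.
exact: hom_left_normed_mul.
Qed.

Lemma spow_Asq_Lp n v : spow A (Asq A) n v -> Lp n.+1 v.
Proof.
elim=> {n v} [v Av | i j x y _ _ _ Lx _ Ly | n _ | n x y _ _ Lx _ Ly | n a x _ _ Lx].
- apply: (span_mono _ Av) => _ [x [y ->]]; exact/left_normedS/left_normed1.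
- by move: (Lp_mul Lx Ly); rewrite addnS.
- exact: span_zero.
- exact: span_add.
- exact: span_scale.
Qed.

End LeftNormed.

Theorem lemma4p2 (F : fieldType) (V : lmodType F) (A : superalgebra F V) :
  is_GDN A ->
  forall n : nat, (1 <= n)%N ->
    is_ideal A (Lpow A n) /\
    (forall v, spow A (Asq A) n v -> Lpow A n.+1 v).
Proof.
move=> GDN_A n n_gt0; split; last first.
  by move=> v /(spow_Asq_Lp GDN_A) Lv; apply/LpowE.
split; first exact: span_zero.
split; first by move=> x y; apply: span_add.
split; first by move=> a x; apply: span_scale.
have Lp1 x : Defs.span (left_normed A 1) x by apply/span_base/left_normed1.
split=> a x /(LpowE _ _ n_gt0) Lx; apply/(LpowE _ _ n_gt0).
- exact: (Lp_mul GDN_A (Lp1 a) Lx).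
- by have := Lp_mul GDN_A Lx (Lp1 a); rewrite addn1.
Qed.
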